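(* Any solution $u^h\in C(G^h)$ of $F^{W,h}[u^h](x)=0$ for all $x\in G^h$ satisfies $$\min_{y\in G^h}g(y)\le u^h(x)\le\max_{y\in G^h}g(y)\qquad\text{for all }x\in G^h;$$ in particular it is bounded independently of $h$.
   Context: Let $\Omega\subset D=[-1,1]^n$, $h>0$, $g\in C(G^h)$. Grid: $G^h=\{x\in h\mathbb{Z}^n: x\in D\}$, $G^h_V=\Omega\cap G^h$, $\partial G^h=G^h\setminus G^h_V$; $C(G^h)$ is the set of functions $G^h\to\mathbb{R}$. A grid direction set $\mathcal{D}^W$ is a finite set of nonzero vectors of $\mathbb{Z}^n$ spanning $\mathbb{R}^n$ and closed under $v\mapsto-v$; $h$ is assumed small enough that $x\pm hv\in G^h$ for all $x\in G^h_V$, $v\in\mathcal{D}^W$. For $v\in\mathcal{D}^W$, $D^h_{vv}u(x)=\frac{u(x+hv)-2u(x)+u(x-hv)}{h^2\|v\|^2}$ ($x\in G^h_V$), $\lambda^h_{\mathcal{D}^W}[u](x)=\min_{v\in\mathcal{D}^W}D^h_{vv}u(x)$, and $F^{W,h}[u](x)=\max\{u(x)-g(x),-\lambda^h_{\mathcal{D}^W}[u](x)\}$ for $x\in G^h_V$, $F^{W,h}[u](x)=u(x)-g(x)$ for $x\in\partial G^h$. *)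

From HB Require Import structures.
From mathcomp Require Import all_boot all_order all_algebra.
From mathcomp Require Import boolp classical_sets reals constructive_ereal.
Set Implicit Arguments. Unset Strict Implicit. Unset Printing Implicit Defensive.
Import Order.TTheory GRing.Theory Num.Theory.
Local Open Scope ring_scope.

Section Defs.
Variables (R : realType) (n : nat).

Definition inCube (x : 'rV[R]_n) : Prop := forall i : 'I_n, `|x 0 i| <= 1.

Definition dirR (v : 'rV[int]_n) : 'rV[R]_n := map_mx (fun z : int => z%:~R) v.

Definition grid (h : R) (x : 'rV[R]_n) : Prop :=
  (exists k : 'rV[int]_n, x = h *: dirR k) /\ inCube x.

Definition gridV (Omega : set 'rV[R]_n) (h : R) (x : 'rV[R]_n) : Prop :=
  grid h x /\ x \in Omega.

Definition sqnorm (v : 'rV[int]_n) : R := \sum_(i < n) (dirR v 0 i) ^+ 2.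

Definition grid_direction_set (Ds : seq 'rV[int]_n) : Prop :=
  [/\ forall v, v \in Ds -> v != 0,
      forall v, v \in Ds -> - v \in Ds &
      forall z : 'rV[R]_n, exists c : 'I_(size Ds) -> R,
        z = \sum_(j < size Ds) c j *: dirR (nth 0 Ds j)].

Definition Dvv (h : R) (u : 'rV[R]_n -> R) (v : 'rV[int]_n) (x : 'rV[R]_n) : R :=
  (u (x + h *: dirR v) - 2 * u x + u (x - h *: dirR v)) / (h ^+ 2 * sqnorm v).

(* lambda^h_{D^W}[u](x) = min_{v in D^W} D^h_vv u(x)  (min over empty set = +oo) *)
Definition lambdah (h : R) (Ds : seq 'rV[int]_n) (u : 'rV[R]_n -> R)
  (x : 'rV[R]_n) : \bar R :=
  \big[Order.min/+oo%E]_(v <- Ds) (Dvv h u v x)%:E.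

Definition FWh (Omega : set 'rV[R]_n) (h : R) (Ds : seq 'rV[int]_n)
  (g u : 'rV[R]_n -> R) (x : 'rV[R]_n) : \bar R :=
  if x \in Omega then Order.max (u x - g x)%:E (- lambdah h Ds u x)%E
  else (u x - g x)%:E.
End Defs.
Arguments dirR {R n} v : rename.
Arguments sqnorm {R n} v : rename.

(* Since F[u] = max(u - g, -lambda[u]) = 0, a solution satisfies u <= g on the grid.
   For the lower bound pick, among the minimizers of u on the finite grid, a point y of
   largest Euclidean norm.  Every second difference of u at y is nonnegative, and none
   vanishes: otherwise both neighbours y +- h v would be minimizers as well, and by the
   parallelogram law one of them would have larger norm.  So lambda[u](y) > 0, and
   F[u](y) = 0 forces u(y) = g(y). *)

From HB Require Import structures.
From mathcomp Require Import all_boot all_order all_algebra.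
From mathcomp Require Import boolp classical_sets reals constructive_ereal.
From mathcomp Require Import ring lra zify.
Set Implicit Arguments. Unset Strict Implicit. Unset Printing Implicit Defensive.
Import Order.TTheory GRing.Theory Num.Theory.
Local Open Scope ring_scope.
Local Open Scope classical_set_scope.

Lemma exists_lexicographic_min_max {d1 d2 : Order.disp_t}
    (T1 : orderType d1) (T2 : orderType d2) (I : finType) (X : Type) (e : I -> X) (S : set X) (f : X -> T1) (w : X -> T2) x :
  S `<=` range e -> S x ->
  exists2 y, S y & forall z, S z -> (f y <= f z)%O /\ (f z = f y -> (w z <= w y)%O).
Proof.
move=> Se Sx; have [i0 _ xi0] := Se x Sx.
pose P : {pred I} := fun i => `[< S (e i) >].
have Pi0 : P i0 by apply/asboolP; rewrite xi0.
case: (arg_minP (f \o e) Pi0) => i1 /asboolP Si1 min_i1.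
pose Q : {pred I} := fun i => P i && (f (e i) == f (e i1)).
have Qi1 : Q i1 by rewrite /Q eqxx andbT; apply/asboolP.
case: (arg_maxP (w \o e) Qi1) => i2 /andP[/asboolP Si2 /eqP fi2] max_i2.
exists (e i2) => // z Sz; have [i _ ezi] := Se z Sz; rewrite -ezi in Sz *.
split=> [|fi]; last by apply: max_i2; rewrite /Q /= fi fi2 eqxx andbT; exact/asboolP.
by rewrite fi2; apply: min_i1; exact/asboolP.
Qed.

Section GridEnumeration.
Variables (R : realType) (n : nat) (h : R).
Hypothesis h_gt0 : 0 < h.

Let N := Num.Def.archi_bound h^-1.

Definition grid_point (t : {ffun 'I_n -> 'I_N.*2.+1}) : 'rV[R]_n :=
  \row_i (h * ((t i)%:R - N%:R)).

Lemma grid_coord_lt (k : 'rV[int]_n) (i : 'I_n) :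
  inCube (h *: dirR k) -> (`|k 0 i| < N%:Z)%R.
Proof.
move=> /(_ i); rewrite /dirR !mxE normrM (gtr0_norm h_gt0) => hk_le1.
have k_le : `|(k 0 i)%:~R| <= h^-1 :> R.
  by rewrite -(ler_pM2l h_gt0) mulrV ?unitfE ?gt_eqF.
rewrite -(ltr_int R) intr_norm; apply: le_lt_trans k_le _.
by apply: archi_boundP; rewrite invr_ge0 ltW.
Qed.

Lemma grid_sub_range : grid h `<=` range grid_point.
Proof.
move=> _ [[k ->] k_cube]; have k_lt i := grid_coord_lt i k_cube.
have shift_ge0 i : (0 <= k 0 i + N%:Z)%R by have := k_lt i; lia.
exists [ffun i => inord (absz (k 0 i + N%:Z))] => //.
apply/matrixP => a i; rewrite !mxE ffunE (ord1 a) inordK; last by have := k_lt i; lia.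
by rewrite -[_%:R]/((absz _)%:Z%:~R) gez0_abs // intrD addrK.
Qed.

End GridEnumeration.

Section SquaredNorm.
Variables (R : realType) (n : nat).

Definition sqnormR (y : 'rV[R]_n) : R := \sum_(i < n) y 0 i ^+ 2.

Lemma sqnormR_parallelogram (y a : 'rV[R]_n) :
  sqnormR (y + a) + sqnormR (y - a) = 2 * sqnormR y + 2 * sqnormR a.
Proof.
rewrite /sqnormR -big_split /= !mulr_sumr -big_split /=.
by apply: eq_bigr => i _; rewrite !mxE; ring.
Qed.

Lemma sqnormRZ (c : R) (a : 'rV[R]_n) : sqnormR (c *: a) = c ^+ 2 * sqnormR a.
Proof. by rewrite /sqnormR mulr_sumr; apply: eq_bigr => i _; rewrite !mxE; ring. Qed.

Lemma sqnorm_gt0 (v : 'rV[int]_n) : v != 0 -> 0 < sqnorm v :> R.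
Proof.
move=> v_neq0; have [i vi_neq0] : exists i, v 0 i != 0.
  apply/existsP; apply: contraNT v_neq0 => /existsPn v_eq0.
  by apply/eqP/matrixP => a b; rewrite !mxE (ord1 a); apply/eqP/negbNE.
rewrite /sqnorm (bigD1 i) //= ltr_pwDl ?sumr_ge0 // => [|j _]; last exact: sqr_ge0.
by rewrite /dirR mxE lt0r sqr_ge0 andbT sqrf_eq0 intr_eq0.
Qed.

End SquaredNorm.
Arguments sqnormR {R n} y.

Lemma Dvv_gt0_at_outermost_min (R : realType) (n : nat) (S : set 'rV[R]_n)
    (h : R) (u : 'rV[R]_n -> R) (v : 'rV[int]_n) (y : 'rV[R]_n) :
  h != 0 -> v != 0 -> S (y + h *: dirR v) -> S (y - h *: dirR v) ->
  (forall z, S z -> u y <= u z) ->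
  (forall z, S z -> u z = u y -> sqnormR z <= sqnormR y) ->
  0 < Dvv h u v y.
Proof.
move=> h_neq0 v_neq0 S_fwd S_bwd min_y outer_y.
have step_gt0 : 0 < sqnormR (h *: dirR v).
  by rewrite sqnormRZ mulr_gt0 ?exprn_even_gt0 ?sqnorm_gt0.
(* [sqnorm v] is convertible to [sqnormR (dirR v)]. *)
rewrite /Dvv divr_gt0 // -?sqnormRZ // ltNge; apply/negP => num_le0.
have := min_y _ S_fwd; have := min_y _ S_bwd => bwd_ge fwd_ge.
have fwd_eq : u (y + h *: dirR v) = u y by lra.
have bwd_eq : u (y - h *: dirR v) = u y by lra.
have := outer_y _ S_fwd fwd_eq; have := outer_y _ S_bwd bwd_eq.
have := sqnormR_parallelogram y (h *: dirR v); lra.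
Qed.

Section Solution.
Variables (R : realType) (n : nat) (Omega : set 'rV[R]_n) (h : R).
Variables (Ds : seq 'rV[int]_n) (g u : 'rV[R]_n -> R) (x : 'rV[R]_n).
Hypothesis u_sol : FWh Omega h Ds g u x = 0%E.

Lemma FWh_eq0_le : u x <= g x.
Proof.
move: u_sol; rewrite /FWh; case: ifP => _.
  by move=> /eqP; rewrite eq_le ge_max lee_fin subr_le0 => /andP[/andP[]].
by case=> /eqP; rewrite subr_eq0 => /eqP->.
Qed.

Lemma FWh_eq0_eq : (x \in Omega -> (0 < lambdah h Ds u x)%E) -> u x = g x.
Proof.
move=> lam_gt0; move: u_sol; rewrite /FWh.
case: ifP => [/lam_gt0 lam_x|_ [/eqP]]; last by rewrite subr_eq0 => /eqP.
rewrite maxEle; case: leP => [_ opp_lam_eq0|_ [/eqP]].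
  by move: lam_x; rewrite -oppe_lt0 opp_lam_eq0 ltxx.
by rewrite subr_eq0 => /eqP.
Qed.

End Solution.

Theorem mainTheorem7 (R : realType) (n : nat) (Omega : set 'rV[R]_n) (h : R)
    (g : 'rV[R]_n -> R) (Ds : seq 'rV[int]_n) (u : 'rV[R]_n -> R) :
  (forall x, x \in Omega -> inCube x) ->
  0 < h ->
  grid_direction_set R Ds ->
  (forall x, gridV Omega h x -> forall v, v \in Ds ->
     grid h (x + h *: (dirR v : 'rV[R]_n)) /\ grid h (x - h *: (dirR v : 'rV[R]_n))) ->
  (forall x, grid h x -> FWh Omega h Ds g u x = 0%E) ->
  forall x, grid h x ->
    (exists2 y, grid h y & g y <= u x) /\ (exists2 y, grid h y & u x <= g y).
Proof.
move=> _ h_gt0 [Ds_neq0 _ _] steps_in_grid u_sol x x_grid.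
split; last by exists x => //; apply: FWh_eq0_le (u_sol x x_grid).
have [y y_grid extremal_y] := exists_lexicographic_min_max u sqnormR (grid_sub_range h_gt0) x_grid.
exists y => //.
rewrite -(FWh_eq0_eq (u_sol y y_grid)); first exact: (extremal_y x x_grid).1.
move=> y_in; rewrite /lambdah big_seq lt_bigmin ?ltry // => v v_Ds.
have [fwd bwd] := steps_in_grid y (conj y_grid y_in) v v_Ds.
rewrite lte_fin (Dvv_gt0_at_outermost_min _ _ fwd bwd) ?gt_eqF ?Ds_neq0 //.
- by move=> z /extremal_y [].
- by move=> z /extremal_y [_].
Qed.
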